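(* Consider the system $x_{k+1}=A_{\theta_k}x_k+B_{\theta_k}u_k$, $y_k=C_{\theta_k}x_k$ with modes in $W=\{1,\dots,n_\theta\}$. Let $N\in\mathbb{N}_+$, $\bar\theta,\bar\theta'\in W$ and $\theta,\theta'\in W^{N}$, and let $\bar\theta\theta,\bar\theta'\theta'\in W^{N+1}$ denote the concatenations. Then for every $u=(u_0,\dots,u_{N-1})\in\mathbb{R}^{Nn_u}$, $$c(\bar\theta\theta,\bar\theta'\theta',u)\subseteq T_{\bar\theta,u_0}^{-1}\big(c(\theta,\theta',(u_1,\dots,u_{N-1}))\big),$$ where $T_{\bar\theta,u_0}^{-1}(C)$ denotes the preimage of a set $C\subseteq\mathbb{R}^{n_x}$ under the affine map $T_{\bar\theta,u_0}:x\mapsto A_{\bar\theta}x+B_{\bar\theta}u_0$.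
   Context: Here $A_i\in\mathbb{R}^{n_x\times n_x}$, $B_i\in\mathbb{R}^{n_x\times n_u}$, $C_i\in\mathbb{R}^{n_y\times n_x}$. For $\theta=(\theta_0,\dots,\theta_T)\in W^{T+1}$, $x\in\mathbb{R}^{n_x}$, $u=(u_0,\dots,u_{T-1})$, let $Y(\theta,x,u)=(C_{\theta_0}x_0,\dots,C_{\theta_T}x_T)$ with $x_0=x$, $x_{k+1}=A_{\theta_k}x_k+B_{\theta_k}u_k$. For paths $\theta,\theta'\in W^{T+1}$ and $u\in\mathbb{R}^{Tn_u}$, define $c(\theta,\theta',u)=\{x\in\mathbb{R}^{n_x}\mid \exists x'\in\mathbb{R}^{n_x}: Y(\theta,x,u)=Y(\theta',x',u)\}$. *)

From HB Require Import structures.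
From mathcomp Require Import all_boot all_order all_algebra.
From mathcomp Require Import boolp classical_sets reals.
Set Implicit Arguments. Unset Strict Implicit. Unset Printing Implicit Defensive.
Import Order.TTheory GRing.Theory Num.Theory.
Local Open Scope ring_scope.

(* Modes W = {1,...,n_theta} are represented by 'I_ntheta.
   A path in W^(T+1) is a function 'I_T.+1 -> 'I_ntheta; an input sequence
   u = (u_0,...,u_{T-1}) is a function 'I_T -> 'cV_nu. *)

Section Sys.
Variables (R : realType) (nth nx nu ny : nat).
Variables (A : 'I_nth -> 'M[R]_nx) (B : 'I_nth -> 'M[R]_(nx, nu))
          (C : 'I_nth -> 'M[R]_(ny, nx)).

(* extension of an input sequence to nat (value irrelevant beyond T) *)
Definition uext (T : nat) (u : 'I_T -> 'cV[R]_nu) (k : nat) : 'cV[R]_nu :=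
  match @insub nat (fun k => (k < T)%N) 'I_T k with Some i => u i | None => 0 end.

Fixpoint state (T : nat) (theta : 'I_T.+1 -> 'I_nth) (x : 'cV[R]_nx)
  (u : 'I_T -> 'cV[R]_nu) (k : nat) : 'cV[R]_nx :=
  match k with
  | 0 => x
  | k'.+1 => A (theta (inord k')) *m state theta x u k'
             + B (theta (inord k')) *m uext u k'
  end.

Definition Y (T : nat) (theta : 'I_T.+1 -> 'I_nth) (x : 'cV[R]_nx)
  (u : 'I_T -> 'cV[R]_nu) : {ffun 'I_T.+1 -> 'cV[R]_ny} :=
  [ffun k : 'I_T.+1 => C (theta k) *m state theta x u k].

Definition cset (T : nat) (theta theta' : 'I_T.+1 -> 'I_nth)
  (u : 'I_T -> 'cV[R]_nu) : set 'cV[R]_nx :=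
  [set x | exists x' : 'cV[R]_nx, Y theta x u = Y theta' x' u].

Definition Taff (thb : 'I_nth) (u0 : 'cV[R]_nu) (x : 'cV[R]_nx) : 'cV[R]_nx :=
  A thb *m x + B thb *m u0.
End Sys.

Definition concat (nth N : nat) (thb : 'I_nth) (theta : 'I_N -> 'I_nth)
  (i : 'I_N.+1) : 'I_nth :=
  match unlift ord0 i with None => thb | Some j => theta j end.

Definition utail (V : Type) (N : nat) (u : 'I_N.+1 -> V) (j : 'I_N) : V :=
  u (lift ord0 j).

(* Running the system along the path [thb theta] from [x] is, after its first
   step, the same as running it along [theta] from [Taff thb u_0 x] with the
   shifted inputs.  Hence if [x'] witnesses [x \in c(thb theta, thb' theta', u)],
   dropping the first output shows that [Taff thb' u_0 x'] witnesses
   [Taff thb u_0 x \in c(theta, theta', utail u)]. *)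
From HB Require Import structures.
From mathcomp Require Import all_boot all_order all_algebra.
From mathcomp Require Import boolp classical_sets reals.
Local Open Scope ring_scope.
Local Open Scope classical_set_scope.

Lemma concat0 (nth N : nat) (thb : 'I_nth) (theta : 'I_N -> 'I_nth) :
  concat thb theta ord0 = thb.
Proof. by rewrite /concat unlift_none. Qed.

Lemma concat_lift (nth N : nat) (thb : 'I_nth) (theta : 'I_N -> 'I_nth) j :
  concat thb theta (lift ord0 j) = theta j.
Proof. by rewrite /concat liftK. Qed.

Lemma concat_inordS (nth T : nat) (thb : 'I_nth) (theta : 'I_T.+1 -> 'I_nth) k :
  (k <= T)%N -> concat thb theta (inord k.+1) = theta (inord k).
Proof.
move=> le_kT; have -> : (inord k.+1 : 'I_T.+2) = lift ord0 (inord k).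
  by apply: val_inj; rewrite /= /bump /= !inordK.
exact: concat_lift.
Qed.

Section Shift.
Variables (R : realType) (nth nx nu : nat).
Variables (A : 'I_nth -> 'M[R]_nx) (B : 'I_nth -> 'M[R]_(nx, nu)).

Lemma uext0 (T : nat) (u : 'I_T.+1 -> 'cV[R]_nu) : uext u 0 = u ord0.
Proof. by rewrite /uext; case: insubP => [i _ /= i0|] //; congr u; apply: val_inj. Qed.

Lemma uext_utail (T : nat) (u : 'I_T.+1 -> 'cV[R]_nu) k :
  uext u k.+1 = uext (utail u) k.
Proof.
rewrite /uext /utail.
case: insubP => [i lt_kT ik|ge_kT]; case: insubP => [j lt_kT' jk|ge_kT'] //.
- by congr u; apply: val_inj; rewrite /= /bump /= ik jk.
- by move: lt_kT ge_kT'; rewrite ltnS => ->.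
- by move: ge_kT lt_kT'; rewrite ltnS => /negP.
Qed.

Lemma state_concat (T : nat) (thb : 'I_nth) (theta : 'I_T.+1 -> 'I_nth)
  (u : 'I_T.+1 -> 'cV[R]_nu) x k : (k <= T)%N ->
  state A B (concat thb theta) x u k.+1 =
  state A B theta (Taff A B thb (u ord0) x) (utail u) k.
Proof.
elim: k => [_|k IH lt_kT] /=.
  have -> : (inord 0 : 'I_T.+2) = ord0 by apply: val_inj; rewrite /= inordK.
  by rewrite concat0 uext0.
rewrite -IH ?(ltnW lt_kT) // concat_inordS ?(ltnW lt_kT) //.
by rewrite uext_utail.
Qed.

Lemma Y_concat_lift (ny : nat) (C : 'I_nth -> 'M[R]_(ny, nx)) (T : nat)
  (thb : 'I_nth) (theta : 'I_T.+1 -> 'I_nth) (u : 'I_T.+1 -> 'cV[R]_nu) x k :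
  Y A B C (concat thb theta) x u (lift ord0 k) =
  Y A B C theta (Taff A B thb (u ord0) x) (utail u) k.
Proof.
by rewrite !ffunE concat_lift [nat_of_ord _]/= state_concat // -ltnS.
Qed.

End Shift.

Theorem lemma5 (R : realType) (nth nx nu ny : nat)
  (A : 'I_nth -> 'M[R]_nx) (B : 'I_nth -> 'M[R]_(nx, nu))
  (C : 'I_nth -> 'M[R]_(ny, nx)) (T : nat)
  (thb thb' : 'I_nth) (theta theta' : 'I_T.+1 -> 'I_nth)
  (u : 'I_T.+1 -> 'cV[R]_nu) :
  cset A B C (concat thb theta) (concat thb' theta') u `<=`
  Taff A B thb (u ord0) @^-1` cset A B C theta theta' (utail u).
Proof.
move=> x [x' eqY]; exists (Taff A B thb' (u ord0) x').
by apply/ffunP => k; rewrite -!Y_concat_lift eqY.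
Qed.
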